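(* Suppose that the ''bounded polynomials have influential variables'' conjecture (stated in the context) holds, and let $\varepsilon,\delta>0$. Then given any quantum algorithm $Q$ that makes $T$ queries to a Boolean input $X\in\{0,1\}^N$, there exists a deterministic classical algorithm that makes $\mathrm{poly}(T,1/\varepsilon,1/\delta)$ queries, and that approximates $Q$'s acceptance probability to within an additive constant $\varepsilon$ on a $1-\delta$ fraction of inputs $X\in\{0,1\}^N$.
   Context: For a real polynomial $p:\mathbb{R}^N\to\mathbb{R}$ and $X\in\{0,1\}^N$, let $X^i$ denote $X$ with the $i$-th bit flipped. Define the $L_1$-variance $\mathrm{Vr}[p]:=\mathrm{E}_{X,Y\in\{0,1\}^N}[|p(X)-p(Y)|]$ and the influence of the $i$-th variable $\mathrm{Inf}_i[p]:=\mathrm{E}_{X\in\{0,1\}^N}[|p(X)-p(X^i)|]$. The conjecture (''bounded polynomials have influential variables''): for every polynomial $p:\mathbb{R}^N\to\mathbb{R}$ of degree $d$ such that $0\le p(X)\le 1$ for all $X\in\{0,1\}^N$ and $\mathrm{Vr}[p]\ge\varepsilon$, there exists an $i\in[N]$ such that $\mathrm{Inf}_i[p]\ge(\varepsilon/d)^{O(1)}$. *)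

From HB Require Import structures.
From mathcomp Require Import all_boot all_order all_algebra.
From mathcomp Require Import reals.
From mathcomp Require Import mpoly.
From mathcomp Require Import complex.
From mathcomp Require Import sesquilinear spectral.

Set Implicit Arguments.
Unset Strict Implicit.
Unset Printing Implicit Defensive.

Import Order.TTheory GRing.Theory Num.Theory.
Local Open Scope ring_scope.

Definition input (N : nat) := {ffun 'I_N -> bool}.

Definition flip (N : nat) (X : input N) (i : 'I_N) : input N :=
  [ffun j => if j == i then ~~ X j else X j].

Definition peval (R : realType) (N : nat) (p : {mpoly R[N]}) (X : input N) : R :=
  p.@[fun j => (X j)%:R].

Definition Vr (R : realType) (N : nat) (p : {mpoly R[N]}) : R :=
  (\sum_(X : input N) \sum_(Y : input N) `|peval p X - peval p Y|)
    / (2 ^+ N * 2 ^+ N).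

Definition Inf (R : realType) (N : nat) (p : {mpoly R[N]}) (i : 'I_N) : R :=
  (\sum_(X : input N) `|peval p X - peval p (flip X i)|) / 2 ^+ N.

(* total degree of a multivariate polynomial (deg 0 := 0) *)
Definition mdegree (R : realType) (N : nat) (p : {mpoly R[N]}) : nat :=
  (msize p).-1.

Definition influence_conjecture (R : realType) : Prop :=
  exists C : nat,
    forall (N d : nat) (p : {mpoly R[N]}) (eps : R),
      0 < eps ->
      mdegree p = d ->
      (forall X : input N, 0 <= peval p X <= 1) ->
      eps <= Vr p ->
      exists i : 'I_N, (eps / d%:R) ^+ C <= Inf p i.

(* Quantum query algorithms (phase-oracle model).                             *)
(* The Hilbert space has basis 'I_n.+1; each basis state k is labelled by     *)
(* qidx k : option 'I_N, the index queried in that basis state (None = the    *)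
(* "no query" index 0).  The oracle is O_X |k> = (-1)^{X_(qidx k)} |k>.      *)
(* A T-query algorithm is U_T O_X U_(T-1) ... U_1 O_X U_0 |0>, with unitary   *)
(* U_0..U_T, followed by measurement in the computational basis; it accepts   *)
(* when the outcome lies in qacc.                                             *)

Record qalg (R : realType) (N T : nat) := QAlg {
  qdim : nat;
  qidx : 'I_qdim.+1 -> option 'I_N;
  qU : 'I_T.+1 -> 'M[R[i]]_qdim.+1;
  qU_unitary : forall k, qU k \is unitarymx;
  qacc : {set 'I_qdim.+1}
}.

Arguments qdim {R N T} q.
Arguments qidx {R N T} q _.
Arguments qU {R N T} q _.
Arguments qacc {R N T} q.

Section QAlgSem.
Variables (R : realType) (N T : nat) (Q : qalg R N T).

Definition oracle (X : input N) : 'M[R[i]]_((qdim Q).+1) :=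
  diag_mx (\row_k (match qidx Q k with
                   | Some j => if X j then -1 else 1
                   | None => 1 end)).

Definition init_state : 'cV[R[i]]_((qdim Q).+1) := delta_mx 0 0.

Fixpoint qstate (X : input N) (k : nat) : 'cV[R[i]]_((qdim Q).+1) :=
  match k with
  | 0 => qU Q (inord 0) *m init_state
  | k'.+1 => qU Q (inord k) *m (oracle X *m qstate X k')
  end.

Definition sqmod (z : R[i]) : R := complex.Re z ^+ 2 + complex.Im z ^+ 2.

Definition acc_prob (X : input N) : R :=
  \sum_(k in qacc Q) sqmod (qstate X T k 0).

End QAlgSem.

(* Deterministic classical query algorithms = decision trees with real        *)
(* outputs; the number of queries is the depth.                              *)

Inductive dtree (R : Type) (N : nat) : Type :=
| DLeaf of R
| DNode of 'I_N & dtree R N & dtree R N. (* query i; left = X_i false *)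

Fixpoint deval (R : Type) (N : nat) (t : dtree R N) (X : input N) : R :=
  match t with
  | DLeaf r => r
  | DNode i t0 t1 => if X i then deval t1 X else deval t0 X
  end.

Fixpoint depth (R : Type) (N : nat) (t : dtree R N) : nat :=
  match t with
  | DLeaf _ => 0
  | DNode _ t0 t1 => (maxn (depth t0) (depth t1)).+1
  end.

From mathcomp Require Import all_boot all_order all_algebra.
From mathcomp Require Import reals mpoly complex sesquilinear spectral.
From mathcomp Require Import ring lra zify.
Import Order.TTheory GRing.Theory Num.Theory.

(* On every subcube, the acceptance
   probability [f] of a [T]-query algorithm is a polynomial of degree at most
   [2 T] with values in [[0, 1]].  The classical algorithm repeatedly queries a
   variable whose influence on the current restriction of [f] is at least
   [eta], for at most [L] steps, and then outputs the mean of [f] on the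
   remaining subcube.  If it stops because no variable is influential, the
   conjecture makes the variance of the restriction small and Markov's
   inequality bounds the probability of an [eps]-error.  Otherwise the budget
   is spent; each query lowers the expected potential
   [sum_j (f X - f (X^j))^2] by at least [eta^2], whereas the hybrid argument
   bounds that potential by [16 T^2], so this happens with probability at most
   [16 T^2 / (L eta^2)]. *)

Set Implicit Arguments.
Unset Strict Implicit.
Unset Printing Implicit Defensive.

Local Open Scope ring_scope.

Section FiniteSums.
Variable R : realFieldType.

Lemma cauchy_schwarz_sum (I : finType) (a b : I -> R) :
  (\sum_k a k * b k) ^+ 2 <= (\sum_k a k ^+ 2) * (\sum_k b k ^+ 2).
Proof.
have sum_prod (F G : I -> R) : \sum_x \sum_y F x * G y = (\sum_x F x) * (\sum_y G y).
  by rewrite mulr_suml; apply: eq_bigr => x _; rewrite mulr_sumr.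
have lagrange : \sum_x \sum_y (a x * b y - a y * b x) ^+ 2 =
    \sum_x \sum_y (a x ^+ 2 * b y ^+ 2) + \sum_x \sum_y (b x ^+ 2 * a y ^+ 2)
    - (\sum_x \sum_y ((a x * b x) * (a y * b y))) *+ 2.
  rewrite -!big_split -sumrMnl -sumrB /=; apply: eq_bigr => x _.
  rewrite -!big_split -sumrMnl -sumrB /=; apply: eq_bigr => y _.
  by rewrite mulr2n; ring.
have : 0 <= \sum_x \sum_y (a x * b y - a y * b x) ^+ 2.
  by apply: sumr_ge0 => x _; apply: sumr_ge0 => y _; apply: sqr_ge0.
rewrite lagrange !sum_prod (mulrC (\sum_x b x ^+ 2)) -expr2 subr_ge0.
by rewrite -mulr2n -[_ *+ 2]mulr_natr -[X in _ <= X]mulr_natr ler_pM2r.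
Qed.

Lemma sqr_sum_le_card (I : finType) (a : I -> R) :
  (\sum_k a k) ^+ 2 <= #|I|%:R * \sum_k a k ^+ 2.
Proof.
have /= := cauchy_schwarz_sum a (fun=> 1).
have -> : \sum_k a k * 1 = \sum_k a k by apply: eq_bigr => k _; rewrite mulr1.
have -> : \sum_(k : I) (1 : R) ^+ 2 = #|I|%:R.
  by rewrite (eq_bigr (fun=> 1)) ?sumr_const // => k _; rewrite expr1n.
by rewrite mulrC.
Qed.

End FiniteSums.

(* A restriction fixes some variables; [fill r Y] is the point of its subcube
   that agrees with [Y] on the free variables. *)
Definition restriction (N : nat) := {ffun 'I_N -> option bool}.

Section Cube.
Variables (R : realFieldType) (N : nat).
Implicit Types (X Y : input N) (r : restriction N) (g h : input N -> R).

Definition fill r Y : input N := [ffun j => if r j is Some b then b else Y j].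

Definition set_var r (i : 'I_N) (b : bool) : restriction N :=
  [ffun j => if j == i then Some b else r j].

Definition free_vars : restriction N := [ffun _ => None].

Definition mean g : R := (\sum_Y g Y) / 2 ^+ N.

(* [Vr p] and [Inf p i] are convertible to [fVr (peval p)] and
   [fInf (peval p) i]. *)
Definition fVr g : R := (\sum_X \sum_Y `|g X - g Y|) / (2 ^+ N * 2 ^+ N).

Definition fInf g (i : 'I_N) : R := (\sum_X `|g X - g (flip X i)|) / 2 ^+ N.

Lemma flipK (i : 'I_N) : involutive (fun X : input N => flip X i).
Proof. by move=> X; apply/ffunP => j; rewrite !ffunE; case: eqP => // ->; rewrite negbK. Qed.

Lemma flip_self X (i : 'I_N) : flip X i i = ~~ X i.
Proof. by rewrite ffunE eqxx. Qed.

Lemma fill_free_vars Y : fill free_vars Y = Y.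
Proof. by apply/ffunP => j; rewrite !ffunE. Qed.

Lemma fill_free_var r i Y : r i = None -> fill r Y i = Y i.
Proof. by move=> ri; rewrite ffunE ri. Qed.

Lemma flip_fill r i Y : r i = None -> flip (fill r Y) i = fill r (flip Y i).
Proof.
move=> ri; apply/ffunP => j; rewrite !ffunE.
by case: (j =P i) => [->|_]; [rewrite ri | case: (r j)].
Qed.

Lemma fill_set_var r i b Y : r i = None -> Y i = b -> fill (set_var r i b) Y = fill r Y.
Proof. by move=> ri Yi; apply/ffunP => j; rewrite !ffunE; case: eqP => // ->; rewrite ri. Qed.

Lemma fill_set_var_flip r i b Y : fill (set_var r i b) (flip Y i) = fill (set_var r i b) Y.
Proof. by apply/ffunP => j; rewrite !ffunE; case: eqP. Qed.

Lemma eq_fVr g h : g =1 h -> fVr g = fVr h.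
Proof. by move=> gh; congr (_ / _); apply: eq_bigr => X _; apply: eq_bigr => Y _; rewrite !gh. Qed.

Lemma eq_fInf g h i : g =1 h -> fInf g i = fInf h i.
Proof. by move=> gh; congr (_ / _); apply: eq_bigr => X _; rewrite !gh. Qed.

Lemma card_input : #|{: input N}| = (2 ^ N)%N.
Proof. by rewrite card_ffun card_bool card_ord. Qed.

Lemma sum_input_cst (c : R) : \sum_(Y : input N) c = 2 ^+ N * c.
Proof. by rewrite sumr_const cardT -cardE card_input -[c *+ _]mulr_natl natrX. Qed.

Lemma mean_cst (c : R) : mean (fun=> c) = c.
Proof. by rewrite /mean sum_input_cst mulrC mulKf // expf_neq0 // pnatr_eq0. Qed.

Lemma eq_mean g h : g =1 h -> mean g = mean h.
Proof. by move=> gh; rewrite /mean (eq_bigr _ (fun Y _ => gh Y)). Qed.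

Lemma ler_mean g h : (forall Y, g Y <= h Y) -> mean g <= mean h.
Proof. by move=> gh; rewrite ler_pM2r ?invr_gt0 ?exprn_gt0 // ler_sum. Qed.

Lemma mean_ge0 g : (forall Y, 0 <= g Y) -> 0 <= mean g.
Proof. by move=> g0; rewrite -(mean_cst 0) ler_mean. Qed.

Lemma meanD g h : mean (fun Y => g Y + h Y) = mean g + mean h.
Proof. by rewrite /mean big_split mulrDl. Qed.

Lemma meanMr g (c : R) : mean (fun Y => g Y * c) = mean g * c.
Proof. by rewrite /mean -mulr_suml mulrAC. Qed.

Lemma sum_fill_set_var r i b (G : input N -> R) : r i = None ->
  \sum_Y G (fill (set_var r i b) Y) = 2 * \sum_(Y : input N | Y i == b) G (fill r Y).
Proof.
move=> ri; rewrite (bigID (fun Y : input N => Y i == b)) /= mulr2n mulrDl mul1r.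
rewrite [X in _ + X](reindex_inj (can_inj (flipK i))) /=; congr (_ + _).
  by apply: eq_bigr => Y /eqP Yi; rewrite fill_set_var.
apply: eq_big => [Y|Y]; first by rewrite flip_self; case: (Y i); case: b.
rewrite flip_self => /eqP Yi.
by rewrite fill_set_var_flip fill_set_var //; case: (Y i) Yi; case: b.
Qed.

Lemma mean_split_var r i (H : bool -> input N -> R) : r i = None ->
  mean (fun Y => H (Y i) (fill r Y)) =
  (mean (fun Y => H false (fill (set_var r i false) Y)) +
   mean (fun Y => H true (fill (set_var r i true) Y))) / 2.
Proof.
move=> ri; rewrite /mean !sum_fill_set_var //.
have -> : \sum_(Y : input N) H (Y i) (fill r Y) =
            \sum_(Y : input N | Y i == false) H false (fill r Y) +
            \sum_(Y : input N | Y i == true) H true (fill r Y).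
  rewrite (bigID (fun Y : input N => Y i == false)) /=; congr (_ + _).
    by apply: eq_bigr => Y /eqP ->.
  by apply: eq_big => [Y|Y]; case: (Y i).
by field; rewrite expf_neq0 // pnatr_eq0.
Qed.

Lemma sqr_mean_le g : mean g ^+ 2 <= mean (fun Y => g Y ^+ 2).
Proof.
have := sqr_sum_le_card g; rewrite card_input natrX /mean expr_div_n.
rewrite [2 ^+ N ^+ 2]expr2 invfM mulrA => H.
by rewrite ler_pM2r ?invr_gt0 ?exprn_gt0 // ler_pdivrMr ?exprn_gt0 // mulrC.
Qed.

Lemma mean_abs_dev_le_fVr g : mean (fun Y => `|mean g - g Y|) <= fVr g.
Proof.
have dev_le Y : `|mean g - g Y| <= mean (fun X => `|g X - g Y|).
  rewrite -{1}(mean_cst (g Y)) /mean -mulrBl -sumrB normrM.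
  rewrite [`|_^-1|]ger0_norm ?invr_ge0 ?exprn_ge0 // ler_pM2r ?invr_gt0 ?exprn_gt0 //.
  exact: ler_norm_sum.
apply: le_trans (ler_mean dev_le) _.
rewrite /mean /fVr invfM mulrA -mulr_suml exchange_big /=.
by rewrite ler_pM2r ?invr_gt0 ?exprn_gt0.
Qed.

Lemma markov_mean g (eps : R) : 0 < eps -> (forall Y, 0 <= g Y) ->
  mean (fun Y => ((eps < g Y)%R)%:R) <= mean g / eps.
Proof.
move=> eps0 g0; rewrite -meanMr; apply: ler_mean => Y.
case: ltP => /= [lt_eps|_]; last by rewrite divr_ge0 // ltW.
by rewrite ler_pdivlMr // mul1r ltW.
Qed.

Lemma fInf_fill_fixed (f : input N -> R) r i b : r i = Some b -> fInf (f \o fill r) i = 0.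
Proof.
move=> ri; rewrite /fInf big1 ?mul0r // => X _ /=.
suff -> : fill r (flip X i) = fill r X by rewrite subrr normr0.
by apply/ffunP => j; rewrite !ffunE; case: eqP => [->|]; rewrite ?ri.
Qed.

Lemma fInf_fill (f : input N -> R) r i : r i = None ->
  fInf (f \o fill r) i = mean (fun Y => `|f (fill r Y) - f (flip (fill r Y) i)|).
Proof. by move=> ri; congr (_ / _); apply: eq_bigr => Y _ /=; rewrite flip_fill. Qed.

End Cube.

Section GreedyTree.
Variables (R : realFieldType) (N : nat) (f : input N -> R) (eta : R).
Hypothesis eta_gt0 : 0 < eta.
Implicit Types (r : restriction N) (L : nat).

Definition influential_var r : option 'I_N := [pick i | eta <= fInf (f \o fill r) i].

Fixpoint greedy_tree r L : dtree R N :=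
  if (L, influential_var r) is (L'.+1, Some i) then
    DNode i (greedy_tree (set_var r i false) L') (greedy_tree (set_var r i true) L')
  else DLeaf _ (mean (f \o fill r)).

(* The probability, over a uniform input, that [greedy_tree r L] spends its
   whole query budget [L]. *)
Fixpoint exhaust_prob r L : R :=
  if L is L'.+1 then
    if influential_var r is Some i then
      (exhaust_prob (set_var r i false) L' + exhaust_prob (set_var r i true) L') / 2
    else 0
  else 1.

Definition err_prob (eps : R) r (t : dtree R N) : R :=
  mean (fun Y => ((eps < `|deval t (fill r Y) - f (fill r Y)|)%R)%:R).

Definition potential r : R :=
  mean (fun Y => \sum_(j | r j == None) (f (fill r Y) - f (flip (fill r Y) j)) ^+ 2).

Lemma influential_var_free r i : influential_var r = Some i -> r i = None.
Proof.
rewrite /influential_var; case: pickP => // j infl [<-].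
case rj: (r j) => [b|] //; move: infl; rewrite (fInf_fill_fixed f rj).
by rewrite leNgt eta_gt0.
Qed.

Lemma depth_greedy_tree r L : (depth (greedy_tree r L) <= L)%N.
Proof.
elim: L r => [|L IH] r //=; case: (influential_var r) => [i|] //=.
by rewrite ltnS geq_max !IH.
Qed.

Lemma exhaust_prob_ge0 r L : 0 <= exhaust_prob r L.
Proof.
elim: L r => [|L IH] r /=; first exact: ler01.
by case: (influential_var r) => [i|] //; rewrite divr_ge0 ?addr_ge0.
Qed.

Lemma exhaust_prob_le1 r L : exhaust_prob r L <= 1.
Proof.
elim: L r => [|L IH] r //=; case: (influential_var r) => [i|]; last exact: ler01.
by rewrite ler_pdivrMr // mul1r; apply: le_trans (lerD (IH _) (IH _)) _.
Qed.

Lemma influential_var_ge r i : influential_var r = Some i -> eta <= fInf (f \o fill r) i.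
Proof. by rewrite /influential_var; case: pickP => // j infl [<-]. Qed.

Lemma potential_ge0 r : 0 <= potential r.
Proof. by apply: mean_ge0 => Y; apply: sumr_ge0 => j _; apply: sqr_ge0. Qed.

Lemma potential_split r i : r i = None ->
  potential r = (potential (set_var r i false) + potential (set_var r i true)) / 2
              + mean (fun Y => (f (fill r Y) - f (flip (fill r Y) i)) ^+ 2).
Proof.
move=> ri.
pose S X := \sum_(j | (r j == None) && (j != i)) (f X - f (flip X j)) ^+ 2.
have potential_set b : potential (set_var r i b) = mean (fun Y => S (fill (set_var r i b) Y)).
  apply: eq_mean => Y; apply: eq_bigl => j; rewrite ffunE.
  by case: (j =P i) => [->|_]; rewrite ?eqxx ?ri ?andbT ?andbF.
rewrite !potential_set -(mean_split_var (fun _ => S) ri) -meanD.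
by apply: eq_mean => Y; rewrite /S (bigD1 i) ?ri //= addrC.
Qed.

Lemma sqr_le_mean_flip r i : eta <= fInf (f \o fill r) i -> r i = None ->
  eta ^+ 2 <= mean (fun Y => (f (fill r Y) - f (flip (fill r Y) i)) ^+ 2).
Proof.
move=> infl ri; rewrite (fInf_fill _ ri) in infl.
apply: le_trans (_ : mean (fun Y => `|f (fill r Y) - f (flip (fill r Y) i)|) ^+ 2 <= _).
  by rewrite !expr2 ler_pM // ltW.
apply: le_trans (sqr_mean_le _) _.
by rewrite le_eqVlt; apply/orP; left; apply/eqP/eq_mean => Y; rewrite real_normK ?num_real.
Qed.

(* Every query of an influential variable consumes at least [eta ^+ 2] of the
   potential. *)
Lemma exhaust_prob_le_potential L r : L%:R * eta ^+ 2 * exhaust_prob r L <= potential r.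
Proof.
elim: L r => [|L IH] r /=; first by rewrite !mul0r potential_ge0.
case infl: (influential_var r) => [i|]; last by rewrite mulr0 potential_ge0.
have ri := influential_var_free infl.
rewrite (potential_split ri) -natr1.
have := sqr_le_mean_flip (influential_var_ge infl) ri.
have := IH (set_var r i false); have := IH (set_var r i true).
have := exhaust_prob_le1 (set_var r i false) L; have := exhaust_prob_le1 (set_var r i true) L.
have := exhaust_prob_ge0 (set_var r i false) L; have := exhaust_prob_ge0 (set_var r i true) L.
have : 0 <= L%:R * eta ^+ 2 by rewrite mulr_ge0 ?sqr_ge0.
have := sqr_ge0 eta.
move: (exhaust_prob _ _) (exhaust_prob _ _) (potential _) (potential _) (mean _).
by move: (L%:R) (eta ^+ 2) => l e2 E1 E0 P1 P0 A *; nra.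
Qed.

Lemma potential_le (B : R) r :
  (forall X, \sum_j (f X - f (flip X j)) ^+ 2 <= B) -> potential r <= B.
Proof.
move=> sens_le; rewrite -(mean_cst N B); apply: ler_mean => Y.
apply: le_trans (sens_le (fill r Y)).
rewrite [leRHS](bigID (fun j => r j == None)) /= lerDl.
by apply: sumr_ge0 => j _; apply: sqr_ge0.
Qed.

Lemma card_good_inputs (eps : R) (t : dtree R N) :
  #|[set X : input N | `|deval t X - f X| <= eps]|%:R = 2 ^+ N * (1 - err_prob eps (free_vars N) t).
Proof.
rewrite -sum1_card natr_sum big_mkcond /=.
rewrite (eq_bigr (fun X => 1 - ((eps < `|deval t X - f X|)%R)%:R)); last first.
  by move=> X _; rewrite inE; case: leP => _ /=; rewrite ?subr0 ?subrr.
rewrite sumrB sum_input_cst mulr1 /err_prob /mean mulrBr mulr1 mulrCA mulfV ?mulr1.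
  by congr (_ - _); apply: eq_bigr => Y _; rewrite fill_free_vars.
by rewrite expf_neq0 // pnatr_eq0.
Qed.

Section Leaves.
Variables (eps epsv : R).
Hypotheses (eps_gt0 : 0 < eps) (epsv_ge0 : 0 <= epsv).
Hypothesis low_influence_low_variance :
  forall r, (forall i, fInf (f \o fill r) i < eta) -> fVr (f \o fill r) < epsv.

(* Markov's inequality at the leaves that are not due to the budget: there no
   influence reaches [eta], so the variance is below [epsv]. *)
Lemma err_prob_greedy_tree L r :
  err_prob eps r (greedy_tree r L) <= exhaust_prob r L + epsv / eps.
Proof.
elim: L r => [|L IH] r /=.
  apply: le_trans (_ : 1 <= _); last by rewrite lerDl divr_ge0 // ltW.
  by rewrite -(mean_cst N (1 : R)) ler_mean // => Y; case: ltP.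
case infl: (influential_var r) => [i|] /=.
  pose H b X := ((eps < `|deval (greedy_tree (set_var r i b) L) X - f X|)%R)%:R : R.
  rewrite /err_prob (eq_mean (h := fun Y => H (Y i) (fill r Y))); last first.
    by move=> Y /=; rewrite /H fill_free_var ?(influential_var_free infl) //; case: (Y i).
  rewrite (mean_split_var H (influential_var_free infl)).
  have IHb b := IH (set_var r i b); rewrite /err_prob in IHb.
  by move: (IHb false) (IHb true); rewrite /H; lra.
have low_infl i : fInf (f \o fill r) i < eta.
  by move: infl; rewrite /influential_var; case: pickP => // /(_ i) /negbT; rewrite -ltNge.
rewrite add0r; apply: le_trans (markov_mean eps_gt0 (fun Y => normr_ge0 _)) _.
rewrite ler_pM2r ?invr_gt0 //; apply: le_trans (mean_abs_dev_le_fVr (f \o fill r)) _.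
exact/ltW/low_influence_low_variance.
Qed.

Lemma err_prob_greedy_tree_le (B : R) L : (0 < L)%N ->
  (forall X, \sum_j (f X - f (flip X j)) ^+ 2 <= B) ->
  err_prob eps (free_vars N) (greedy_tree (free_vars N) L) <= B / (L%:R * eta ^+ 2) + epsv / eps.
Proof.
move=> L_gt0 sens_le; apply: le_trans (err_prob_greedy_tree L _) _; rewrite lerD2r.
rewrite ler_pdivlMr ?mulr_gt0 ?ltr0n ?exprn_gt0 // mulrC.
exact: le_trans (exhaust_prob_le_potential L _) (potential_le _ sens_le).
Qed.

End Leaves.
End GreedyTree.

Section ComplexVectors.
Variable R : realType.
Implicit Types (z w : R[i]).

Lemma sqmod_ge0 z : 0 <= sqmod z.
Proof. by rewrite /sqmod addr_ge0 ?sqr_ge0. Qed.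

Lemma sqmodM z w : sqmod (z * w) = sqmod z * sqmod w.
Proof. by case: z => a b; case: w => c d; rewrite /sqmod /=; ring. Qed.

Lemma sqmodN z : sqmod (- z) = sqmod z.
Proof. by case: z => a b; rewrite /sqmod /= !sqrrN. Qed.

Lemma sqmod0 : sqmod (0 : R[i]) = 0.
Proof. by rewrite /sqmod /= expr0n addr0. Qed.

Lemma conjC_mul_sqmod z : Num.conj z * z = (sqmod z)%:C%C.
Proof.
case: z => a b; rewrite /sqmod /=.
by apply/eqP; rewrite eq_complex /=; apply/andP; split; apply/eqP; ring.
Qed.

Variable m : nat.
Implicit Types (u v : 'cV[R[i]]_m) (A : pred 'I_m).

Definition norm2 v : R := \sum_k sqmod (v k 0).

Definition vnorm v : R := Num.sqrt (norm2 v).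

Definition dotr A u v : R :=
  \sum_(k | A k)
    (complex.Re (u k 0) * complex.Re (v k 0) + complex.Im (u k 0) * complex.Im (v k 0)).

Lemma norm2_ge0 v : 0 <= norm2 v.
Proof. by apply: sumr_ge0 => k _; apply: sqmod_ge0. Qed.

Lemma vnorm_ge0 v : 0 <= vnorm v.
Proof. exact: sqrtr_ge0. Qed.

Lemma sqr_vnorm v : vnorm v ^+ 2 = norm2 v.
Proof. by rewrite sqr_sqrtr // norm2_ge0. Qed.

Local Open Scope sesquilinear_scope.

Lemma norm2_unitary (U : 'M[R[i]]_m) v : U \is unitarymx -> norm2 (U *m v) = norm2 v.
Proof.
have norm2_mx (x : 'cV[R[i]]_m) : (x ^t* *m x) 0 0 = (norm2 x)%:C%C.
  by rewrite !mxE raddf_sum; apply: eq_bigr => k _; rewrite !mxE conjC_mul_sqmod.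
move=> uU; apply: (@complexI R); rewrite -!norm2_mx.
by rewrite trmx_mul map_mxM mulmxA mulmxKtV.
Qed.

Local Close Scope sesquilinear_scope.

Lemma vnorm_unitary (U : 'M[R[i]]_m) v : U \is unitarymx -> vnorm (U *m v) = vnorm v.
Proof. by move=> uU; rewrite /vnorm norm2_unitary. Qed.

Lemma cauchy_schwarz_dotr A u v : dotr A u v ^+ 2 <= norm2 u * norm2 v.
Proof.
pose coord (x : 'cV[R[i]]_m) (p : 'I_m * bool) :=
  if p.2 then complex.Im (x p.1 0) else complex.Re (x p.1 0).
pose uA p := if A p.1 then coord u p else 0.
have sum_pairs (F : 'I_m * bool -> R) : \sum_p F p = \sum_k (F (k, false) + F (k, true)).
  rewrite (eq_bigr (fun k => \sum_c F (k, c))) => [|k _]; last by rewrite big_bool addrC.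
  by rewrite pair_big; apply: eq_bigr => -[k c].
have -> : dotr A u v = \sum_p uA p * coord v p.
  rewrite sum_pairs /dotr big_mkcond /=; apply: eq_bigr => k _.
  by rewrite /uA /=; case: (A k); rewrite ?mul0r ?addr0.
have sum_sqr_coord x : \sum_p coord x p ^+ 2 = norm2 x.
  by rewrite sum_pairs; apply: eq_bigr.
apply: le_trans (cauchy_schwarz_sum _ _) _; rewrite sum_sqr_coord ler_wpM2r ?norm2_ge0 //.
rewrite -sum_sqr_coord; apply: ler_sum => p _; rewrite /uA.
by case: (A p.1) => //; rewrite expr0n /=; apply: sqr_ge0.
Qed.

Lemma ler_abs_dotr A u v : `|dotr A u v| <= vnorm u * vnorm v.
Proof.
rewrite /vnorm -sqrtrM ?norm2_ge0 // -sqrtr_sqr ler_wsqrtr //.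
exact: cauchy_schwarz_dotr.
Qed.

Lemma norm2D u v : norm2 (u + v) = norm2 u + norm2 v + 2 * dotr predT u v.
Proof.
rewrite /norm2 /dotr mulr_sumr -!big_split /=; apply: eq_bigr => k _.
by rewrite !mxE /sqmod; case: (u k 0) => a b; case: (v k 0) => c d /=; ring.
Qed.

Lemma vnormD u v : vnorm (u + v) <= vnorm u + vnorm v.
Proof.
rewrite {1}/vnorm -[vnorm u + vnorm v]ger0_norm ?addr_ge0 ?vnorm_ge0 //.
rewrite -sqrtr_sqr ler_wsqrtr // norm2D sqrrD !sqr_vnorm.
have := ler_abs_dotr predT u v; have := ler_norm (dotr predT u v).
by move: (dotr _ _ _) (vnorm u * vnorm v) => x y; lra.
Qed.

End ComplexVectors.

Section MsizeIdomain.
Variables (R : idomainType) (n : nat).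

Lemma msizeM_le_pred (p q : {mpoly R[n]}) : (msize (p * q) <= (msize p + msize q).-1)%N.
Proof.
have [->|p0] := eqVneq p 0; first by rewrite mul0r msize0.
have [->|q0] := eqVneq q 0; first by rewrite mulr0 msize0.
by rewrite msizeM.
Qed.

Lemma msize_sum_le (I : finType) (P : pred I) (F : I -> {mpoly R[n]}) b :
  (forall k, P k -> msize (F k) <= b)%N -> (msize (\sum_(k | P k) F k) <= b)%N.
Proof. by move=> le_b; apply: leq_trans (msize_sum _ _ _) _; apply/bigmax_leqP. Qed.

End MsizeIdomain.

Section QueryAlgorithm.
Variables (R : realType) (N T : nat) (Q : qalg R N T).
Implicit Types (X Y : input N) (r : restriction N).
Local Notation vec := 'cV[R[i]]_((qdim Q).+1).

Definition query_sign X (o : option 'I_N) : R[i] :=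
  if o is Some j then (if X j then -1 else 1) else 1.

Lemma oracleE X (v : vec) k : (oracle Q X *m v) k 0 = query_sign X (qidx Q k) * v k 0.
Proof. by rewrite mul_diag_mx !mxE. Qed.

Lemma sqmod_query_sign X o z : sqmod (query_sign X o * z) = sqmod z.
Proof.
case: o => [j|] /=; last by rewrite mul1r.
by case: (X j); rewrite ?mulN1r ?sqmodN ?mul1r.
Qed.

Lemma norm2_oracle X (v : vec) : norm2 (oracle Q X *m v) = norm2 v.
Proof. by apply: eq_bigr => k _; rewrite oracleE sqmod_query_sign. Qed.

Lemma norm2_qstate X t : norm2 (qstate Q X t) = 1.
Proof.
elim: t => [|t IH] /=; rewrite norm2_unitary ?qU_unitary ?norm2_oracle //.
rewrite /norm2 (bigD1 ord0) //= big1 => [|k /negbTE k0]; last first.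
  by rewrite /init_state mxE k0 sqmod0.
by rewrite /init_state mxE !eqxx /sqmod /= expr0n /= !addr0 expr1n.
Qed.

Lemma acc_prob_ge0_le1 X : 0 <= acc_prob Q X <= 1.
Proof.
rewrite sumr_ge0 => [|k _]; last exact: sqmod_ge0.
rewrite -(norm2_qstate X T) [leRHS](bigID (mem (qacc Q))) /= lerDl.
by rewrite sumr_ge0 // => k _; apply: sqmod_ge0.
Qed.

Definition query_mass X t j : R := \sum_(k | qidx Q k == Some j) sqmod (qstate Q X t k 0).

Lemma query_mass_ge0 X t j : 0 <= query_mass X t j.
Proof. by apply: sumr_ge0 => k _; apply: sqmod_ge0. Qed.

Lemma sum_query_mass_le1 X t : \sum_j query_mass X t j <= 1.
Proof.
rewrite -(norm2_qstate X t) /query_mass (eq_bigr _ (fun j _ => big_mkcond _ _)) /=.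
rewrite exchange_big /=; apply: ler_sum => k _.
case: (qidx Q k) => [j0|]; last by rewrite big1 ?sqmod_ge0.
rewrite (bigD1 j0) //= eqxx big1 ?addr0 // => j /negbTE nj.
by rewrite (inj_eq Some_inj) eq_sym nj.
Qed.

Lemma norm2_oracle_flipB X j (v : vec) :
  norm2 (oracle Q (flip X j) *m v - oracle Q X *m v) =
  4 * \sum_(k | qidx Q k == Some j) sqmod (v k 0).
Proof.
have wE k : (oracle Q (flip X j) *m v - oracle Q X *m v) k 0 =
            (query_sign (flip X j) (qidx Q k) - query_sign X (qidx Q k)) * v k 0.
  have subE (a b : vec) : (a - b) k 0 = a k 0 - b k 0 by rewrite !mxE.
  by rewrite subE !oracleE mulrBl.
rewrite /norm2 (bigID (fun k => qidx Q k == Some j)) /= [X in _ + X]big1 ?addr0.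
  rewrite mulr_sumr; apply: eq_bigr => k /eqP qk.
  rewrite wE sqmodM qk /= ffunE eqxx.
  by case: (X j); rewrite /sqmod /=; congr (_ * _); lra.
move=> k qk; rewrite wE sqmodM.
case: (qidx Q k) qk => [j'|] /= qk; last by rewrite subrr sqmod0 mul0r.
have nj : j' != j by apply: contraNneq qk => ->.
by rewrite ffunE (negbTE nj) subrr sqmod0 mul0r.
Qed.

(* One step of the hybrid argument: flipping [X_j] only changes the sign of the
   amplitudes that query [j]. *)
Lemma vnorm_qstate_flipS X j t :
  vnorm (qstate Q (flip X j) t.+1 - qstate Q X t.+1) <=
  vnorm (qstate Q (flip X j) t - qstate Q X t) + 2 * Num.sqrt (query_mass X t j).
Proof.
rewrite /= -mulmxBr vnorm_unitary ?qU_unitary //.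
set u := qstate Q (flip X j) t; set v := qstate Q X t.
rewrite (_ : _ - _ = oracle Q (flip X j) *m (u - v) + (oracle Q (flip X j) *m v - oracle Q X *m v)).
  apply: le_trans (vnormD _ _) _.
  rewrite /vnorm norm2_oracle lerD2l norm2_oracle_flipB sqrtrM // (_ : 4 = 2 ^+ 2); last lra.
  by rewrite sqrtr_sqr ger0_norm.
by rewrite mulmxBr addrA subrK.
Qed.

Lemma vnorm_qstate_flip_le X j t :
  vnorm (qstate Q (flip X j) t - qstate Q X t) <= \sum_(s < t) 2 * Num.sqrt (query_mass X s j).
Proof.
elim: t => [|t IH]; last by rewrite big_ord_recr /= (le_trans (vnorm_qstate_flipS X j t)) ?lerD2r.
rewrite big_ord0 subrr /vnorm /norm2 big1 ?sqrtr0 // => k _.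
by rewrite mxE sqmod0.
Qed.

(* With [P] the projection on [qacc Q]: [|P u|^2 - |P v|^2 = Re <P (u - v), u + v>]. *)
Lemma sqr_acc_prob_flip_le X j :
  (acc_prob Q (flip X j) - acc_prob Q X) ^+ 2 <=
  4 * vnorm (qstate Q (flip X j) T - qstate Q X T) ^+ 2.
Proof.
set u := qstate Q (flip X j) T; set v := qstate Q X T.
have -> : acc_prob Q (flip X j) - acc_prob Q X = dotr (mem (qacc Q)) (u - v) (u + v).
  rewrite /acc_prob /dotr -sumrB; apply: eq_bigr => k _.
  by rewrite !mxE /sqmod; case: (u k 0) => a b; case: (v k 0) => c d /=; ring.
have vnorm_uv : vnorm (u + v) <= 2.
  by apply: le_trans (vnormD _ _) _; rewrite /vnorm !norm2_qstate sqrtr1; lra.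
rewrite -real_normK ?num_real // (_ : 4 = 2 ^+ 2) -?exprMn; last lra.
apply: lerXn2r; rewrite ?nnegrE ?mulr_ge0 ?vnorm_ge0 //.
apply: le_trans (ler_abs_dotr _ _ _) _.
by rewrite mulrC ler_wpM2r ?vnorm_ge0.
Qed.

Lemma sum_sqr_acc_prob_flip_le X :
  \sum_j (acc_prob Q X - acc_prob Q (flip X j)) ^+ 2 <= 16 * T%:R ^+ 2.
Proof.
have flip_le j : (acc_prob Q X - acc_prob Q (flip X j)) ^+ 2 <=
                 16 * T%:R * \sum_(s < T) query_mass X s j.
  rewrite -sqrrN opprB; apply: le_trans (sqr_acc_prob_flip_le X j) _.
  apply: le_trans (_ : 4 * (\sum_(s < T) 2 * Num.sqrt (query_mass X s j)) ^+ 2 <= _).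
    rewrite ler_pM2l //; apply: lerXn2r; rewrite ?nnegrE ?vnorm_ge0 ?vnorm_qstate_flip_le //.
    by apply: sumr_ge0 => s _; rewrite mulr_ge0 ?sqrtr_ge0.
  apply: le_trans (_ : 4 * (T%:R * \sum_(s < T) (2 * Num.sqrt (query_mass X s j)) ^+ 2) <= _).
    by rewrite ler_pM2l // -[X in X%:R * _](card_ord T) sqr_sum_le_card.
  rewrite (eq_bigr (fun s : 'I_T => 4 * query_mass X s j)) => [|s _]; last first.
    by rewrite exprMn sqr_sqrtr ?query_mass_ge0 //; congr (_ * _); lra.
  by rewrite -mulr_sumr; lra.
apply: le_trans (ler_sum _ (fun j _ => flip_le j)) _.
rewrite -mulr_sumr exchange_big /= expr2 mulrA ler_wpM2l ?mulr_ge0 //.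
apply: le_trans (_ : \sum_(s < T) (1 : R) <= _).
  by apply: ler_sum => s _; apply: sum_query_mass_le1.
by rewrite sumr_const card_ord.
Qed.

End QueryAlgorithm.

Arguments query_sign {R N} X o.

Section AcceptancePolynomial.
Variables (R : realType) (N T : nat) (Q : qalg R N T).
Implicit Types (Y : input N) (r : restriction N).

(* On inputs [fill r Y] the oracle sign at a free variable [j] is the affine
   function [1 - 2 Y_j]. *)
Definition query_sign_mpoly r (o : option 'I_N) : {mpoly R[N]} :=
  if o is Some j then
    if r j is Some b then (if b then -1 else 1) else 1 + (-2 : R) *: 'X_j
  else 1.

Lemma peval_query_sign_mpoly r o Y :
  (peval (query_sign_mpoly r o) Y)%:C%C = query_sign (fill r Y) o.
Proof.
rewrite /peval; case: o => [j|] /=; last by rewrite meval1.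
rewrite ffunE; case: (r j) => [[]|]; rewrite ?mevalN ?meval1 ?rmorphN //.
rewrite mevalD meval1 mevalZ mevalXU; case: (Y j) => /=; last by rewrite mulr0 addr0.
by rewrite (_ : 1 + -2 * 1%:R = -1 :> R) ?rmorphN //; lra.
Qed.

(* Real and imaginary parts of the amplitudes of [qstate Q (fill r Y) t], as
   polynomials in [Y]. *)
Fixpoint amp_mpoly r t : 'I_(qdim Q).+1 -> {mpoly R[N]} * {mpoly R[N]} :=
  if t is t'.+1 then fun k =>
    let U := qU Q (inord t) in
    let s l := query_sign_mpoly r (qidx Q l) in
    (\sum_l (complex.Re (U k l) *: (s l * (amp_mpoly r t' l).1)
             - complex.Im (U k l) *: (s l * (amp_mpoly r t' l).2)),
     \sum_l (complex.Re (U k l) *: (s l * (amp_mpoly r t' l).2)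
             + complex.Im (U k l) *: (s l * (amp_mpoly r t' l).1)))
  else fun k => ((complex.Re (qU Q (inord 0) k 0))%:MP_[N],
                 (complex.Im (qU Q (inord 0) k 0))%:MP_[N]).

Definition acc_mpoly r : {mpoly R[N]} :=
  \sum_(k in qacc Q) ((amp_mpoly r T k).1 ^+ 2 + (amp_mpoly r T k).2 ^+ 2).

Lemma peval_amp_mpoly r Y t k :
  complex.Re (qstate Q (fill r Y) t k 0) = peval (amp_mpoly r t k).1 Y /\
  complex.Im (qstate Q (fill r Y) t k 0) = peval (amp_mpoly r t k).2 Y.
Proof.
rewrite /peval; elim: t k => [|t IH] k /=.
  rewrite !mevalC /init_state !mxE (bigD1 ord0) //= big1 ?addr0 => [|l /negbTE l0].
    by rewrite !mxE !eqxx mulr1.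
  by rewrite !mxE l0 mulr0.
rewrite !mxE !raddf_sum; split; apply: eq_bigr => l _;
  rewrite oracleE -peval_query_sign_mpoly /peval; have [] := IH l;
  case: (qstate Q (fill r Y) t l 0) => x y /= -> ->;
  rewrite ?mevalB ?mevalD !mevalZ !mevalM;
  case: (qU Q _ k l) => a b /=; ring.
Qed.

Lemma peval_acc_mpoly r Y : peval (acc_mpoly r) Y = acc_prob Q (fill r Y).
Proof.
rewrite /peval /acc_mpoly raddf_sum /=; apply: eq_bigr => k _.
have [reE imE] := peval_amp_mpoly r Y T k.
by rewrite mevalD !mevalM /sqmod reE imE !expr2.
Qed.

Lemma msize_amp_mpoly r t k :
  (msize (amp_mpoly r t k).1 <= t.+1)%N /\ (msize (amp_mpoly r t k).2 <= t.+1)%N.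
Proof.
have msize_sign o : (msize (query_sign_mpoly r o) <= 2)%N.
  case: o => [j|] /=; last by rewrite msize1.
  case: (r j) => [[]|]; rewrite ?msizeN ?msize1 //.
  apply: leq_trans (msizeD_le _ _) _; rewrite msize1 geq_max /=.
  by apply: leq_trans (msizeZ_le _ _) _; rewrite msizeX mdeg1.
have msize_term (c : R) o (p : {mpoly R[N]}) n :
    (msize p <= n)%N -> (msize (c *: (query_sign_mpoly r o * p)) <= n.+1)%N.
  move=> hp; apply: leq_trans (msizeZ_le _ _) _; apply: leq_trans (msizeM_le_pred _ _) _.
  rewrite -subn1 leq_subLR; apply: leq_trans (leq_add (msize_sign o) hp) _; lia.
elim: t k => [|t IH] k /=; first by rewrite !msizeC !leq_b1.
by split; apply: msize_sum_le => l _; apply: leq_trans (msizeD_le _ _) _;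
  rewrite geq_max ?msizeN !msize_term //; case: (IH l).
Qed.

Lemma mdegree_acc_mpoly r : (mdegree (acc_mpoly r) <= 2 * T)%N.
Proof.
rewrite /mdegree -subn1 leq_subLR; apply: msize_sum_le => k _.
have [le1 le2] := msize_amp_mpoly r T k.
apply: leq_trans (msizeD_le _ _) _; rewrite geq_max !expr2.
apply/andP; split; apply: leq_trans (msizeM_le_pred _ _) _; rewrite -subn1 leq_subLR.
  by apply: leq_trans (leq_add le1 le1) _; lia.
by apply: leq_trans (leq_add le2 le2) _; lia.
Qed.

End AcceptancePolynomial.

(* [influence_conjecture R] is [exists C, influence_bound R C]. *)
Definition influence_bound (R : realType) (C : nat) : Prop :=
  forall (N d : nat) (p : {mpoly R[N]}) (eps : R),
    0 < eps -> mdegree p = d -> (forall X : input N, 0 <= peval p X <= 1) ->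
    eps <= Vr p -> exists i : 'I_N, (eps / d%:R) ^+ C <= Inf p i.

Section InfluenceBound.
Variables (R : realType) (C : nat).
Hypothesis infl_bound : influence_bound R C.

Lemma Vr_lt_of_small_Inf N (p : {mpoly R[N]}) (eps : R) (D : nat) :
  0 < eps -> (mdegree p <= D)%N -> (forall X, 0 <= peval p X <= 1) ->
  (forall i, Inf p i < (eps / D%:R) ^+ C) -> Vr p < eps.
Proof.
move=> eps_gt0 deg_le bounded small_infl; rewrite ltNge; apply/negP => eps_le.
have [i Inf_ge] := infl_bound eps_gt0 erefl bounded eps_le.
have [deg0|deg_gt0] := posnP (mdegree p).
  suff : Vr p = 0 by move=> Vr0; move: eps_le; rewrite Vr0 leNgt eps_gt0.
  have pC : p = (p@_0)%:MP by apply: msize1_polyC; move: deg0; rewrite /mdegree; lia.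
  rewrite /Vr big1 ?mul0r // => X _; rewrite big1 // => Y _.
  by rewrite /peval pC !mevalC subrr normr0.
have Inf_mono : (eps / D%:R) ^+ C <= (eps / (mdegree p)%:R) ^+ C.
  have eps_ge0 := ltW eps_gt0.
  apply: lerXn2r; rewrite ?nnegrE ?divr_ge0 // ler_pM2l // lef_pV2 ?posrE ?ltr0n ?ler_nat //.
  by apply: leq_trans deg_gt0 deg_le.
by have := lt_le_trans (small_infl i) (le_trans Inf_mono Inf_ge); rewrite ltxx.
Qed.

(* On every subcube, [acc_prob Q] is a polynomial of degree at most [2 T] with
   values in [[0, 1]], so the conjecture applies to it. *)
Lemma fVr_acc_prob_lt N T (Q : qalg R N T) (eps : R) r :
  0 < eps -> (forall i, fInf (acc_prob Q \o fill r) i < (eps / (2 * T.+1)%:R) ^+ C) ->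
  fVr (acc_prob Q \o fill r) < eps.
Proof.
move=> eps_gt0 small_infl.
have accE : peval (acc_mpoly Q r) =1 acc_prob Q \o fill r by move=> Y; apply: peval_acc_mpoly.
rewrite -(eq_fVr accE); apply: (@Vr_lt_of_small_Inf _ _ _ (2 * T.+1)) => //.
- by apply: leq_trans (mdegree_acc_mpoly Q r) _; lia.
- by move=> X; rewrite accE acc_prob_ge0_le1.
by move=> i; move: (small_infl i); rewrite -(eq_fInf _ accE).
Qed.

End InfluenceBound.

Lemma Sn_le_scale (R : realFieldType) (n : nat) (eps delta : R) :
  0 < eps -> eps <= 1 -> 0 < delta -> delta <= 1 -> n.+1%:R <= n.+1%:R / (eps * delta).
Proof.
move=> eps_gt0 eps_le1 delta_gt0 delta_le1.
by rewrite ler_peMr // invf_ge1 ?mulr_gt0 // mulr_ile1 // ltW.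
Qed.

Section Approximation.
Variables (R : realType) (C : nat).
Hypothesis infl_bound : influence_bound R C.
Variables (eps delta : R) (N T : nat) (Q : qalg R N T).
Hypotheses (eps_gt0 : 0 < eps) (eps_le1 : eps <= 1).
Hypotheses (delta_gt0 : 0 < delta) (delta_le1 : delta <= 1).

(* [eta] is the influence that the conjecture guarantees for variance [epsv]
   and degree at most [2 T + 2], so leaves contribute an error probability of
   at most [epsv / eps = delta / 2]; [budget] makes the exhaustion probability
   [16 T^2 / (L eta^2)] at most [delta / 2] too. *)
Let epsv : R := eps * delta / 2.
Let eta : R := (epsv / (2 * T.+1)%:R) ^+ C.
Let budget : R := 32 * T%:R ^+ 2 / (delta * eta ^+ 2).
Let L : nat := (Num.truncn budget).+1.
Let tree := greedy_tree (acc_prob Q) eta (free_vars N) L.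
Let scale : R := T.+1%:R / (eps * delta).

Let T_le_scale : T.+1%:R <= scale := Sn_le_scale T eps_gt0 eps_le1 delta_gt0 delta_le1.

Let scale_gt0 : 0 < scale.
Proof. by apply: lt_le_trans T_le_scale; rewrite ltr0Sn. Qed.

Let epsv_gt0 : 0 < epsv.
Proof. by rewrite divr_gt0 ?mulr_gt0. Qed.

Let eta_gt0 : 0 < eta.
Proof. by rewrite exprn_gt0 // divr_gt0 ?ltr0n. Qed.

Let eta_sqr : eta ^+ 2 = ((4 * scale) ^+ (2 * C))^-1.
Proof.
rewrite /eta (_ : epsv / _ = (4 * scale)^-1); first by rewrite -exprM exprVn mulnC.
rewrite /epsv /scale natrM; field.
by rewrite addrC natr1 pnatr_eq0 (gt_eqF eps_gt0) (gt_eqF delta_gt0).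
Qed.

Let budget_ge0 : 0 <= budget.
Proof. by apply: divr_ge0; rewrite mulr_ge0 ?sqr_ge0 ?ler0n // ltW. Qed.

Let budget_le : budget <= 32 * (4 * scale) ^+ (2 * C + 3).
Proof.
have scale_ge0 := ltW scale_gt0.
have scale_le : scale <= 4 * scale by rewrite ler_peMl ?ler1n.
have T_le : T%:R <= 4 * scale.
  by apply: le_trans scale_le; apply: le_trans T_le_scale; rewrite ler_nat.
have inv_delta_le : delta^-1 <= 4 * scale.
  apply: le_trans scale_le; apply: le_trans (_ : (eps * delta)^-1 <= scale).
    by rewrite lef_pV2 ?posrE ?mulr_gt0 // ler_piMl // ltW.
  by rewrite ler_peMl ?ler1n // invr_ge0 mulr_ge0 // ltW.
have T2_le : T%:R ^+ 2 * delta^-1 <= (4 * scale) ^+ 3.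
  rewrite [X in _ <= X]exprSr ler_pM ?exprn_ge0 ?invr_ge0 ?(ltW delta_gt0) //.
  apply: lerXn2r; rewrite ?nnegrE; [exact: ler0n | rewrite mulr_ge0 ?ler0n // | exact: T_le].
have P_ge0 : 0 <= (4 * scale) ^+ (2 * C) by rewrite exprn_ge0 // mulr_ge0 ?ler0n.
rewrite /budget eta_sqr invfM invrK exprD.
move: T2_le P_ge0; move: (T%:R ^+ 2) (delta^-1) ((4 * scale) ^+ (2 * C)) ((4 * scale) ^+ 3).
by move=> a b p q *; nra.
Qed.

Let depth_tree_le : (depth tree)%:R <= 32 * (4 * scale) ^+ (2 * C + 3) + 1.
Proof.
apply: le_trans (_ : L%:R <= _); first by rewrite ler_nat depth_greedy_tree.
have /andP[trunc_le _] := truncn_itv budget_ge0.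
by rewrite /L -natr1 lerD2r (le_trans trunc_le budget_le).
Qed.

Let err_prob_tree_le : err_prob (acc_prob Q) eps (free_vars N) tree <= delta.
Proof.
have leaf r := @fVr_acc_prob_lt R C infl_bound N T Q _ r epsv_gt0.
apply: le_trans (err_prob_greedy_tree_le eta_gt0 eps_gt0 (ltW epsv_gt0) leaf (ltn0Sn _)
                   (sum_sqr_acc_prob_flip_le Q)) _.
have /andP[_ budget_lt] := truncn_itv budget_ge0.
have e2_gt0 : 0 < delta * eta ^+ 2 := mulr_gt0 delta_gt0 (exprn_gt0 2 eta_gt0).
have budget_le_L : 32 * T%:R ^+ 2 <= L%:R * (delta * eta ^+ 2).
  by rewrite -ler_pdivrMr //; move: budget_lt; rewrite /budget => /ltW.
have query_term_le : 16 * T%:R ^+ 2 / (L%:R * eta ^+ 2) <= delta / 2.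
  have Le2_gt0 : 0 < L%:R * eta ^+ 2 := mulr_gt0 (ltr0Sn _ _) (exprn_gt0 2 eta_gt0).
  rewrite ler_pdivrMr //; move: budget_le_L.
  by move: (L%:R) (eta ^+ 2) (T%:R ^+ 2) => l e t; lra.
have leaf_term : epsv / eps = delta / 2 by rewrite /epsv; field; rewrite (gt_eqF eps_gt0).
apply: le_trans (lerD query_term_le (_ : _ <= delta / 2)) _; first by rewrite leaf_term.
by rewrite -splitr.
Qed.

Lemma quantum_query_approx : exists t : dtree R N,
  (depth t)%:R <= 32 * (4 * scale) ^+ (2 * C + 3) + 1 /\
  (1 - delta) * 2 ^+ N <= #|[set X : input N | `|deval t X - acc_prob Q X| <= eps]|%:R.
Proof.
exists tree; split; first exact: depth_tree_le.
by rewrite card_good_inputs mulrC ler_wpM2l ?exprn_ge0 // lerD2l lerN2 err_prob_tree_le.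
Qed.

End Approximation.

Lemma const_tree_approx (R : realType) (eps delta B : R) N T (Q : qalg R N T) :
  0 < eps -> 0 < delta -> 0 <= B -> 1 <= eps \/ 1 <= delta ->
  exists t : dtree R N, (depth t)%:R <= B /\
    (1 - delta) * 2 ^+ N <= #|[set X : input N | `|deval t X - acc_prob Q X| <= eps]|%:R.
Proof.
move=> eps_gt0 delta_gt0 B_ge0 [eps_ge1|delta_ge1]; exists (DLeaf N 0); split => //.
  rewrite (_ : [set X | _] = setT); last first.
    apply/setP => X; rewrite !inE /= sub0r normrN.
    have /andP[acc_ge0 acc_le1] := acc_prob_ge0_le1 Q X.
    by rewrite ger0_norm // (le_trans acc_le1).
  rewrite cardsT card_input natrX ler_piMl ?exprn_ge0 //.
  by rewrite lerBlDr lerDl (ltW delta_gt0).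
by apply: le_trans (_ : 0 <= _) => //; rewrite mulr_le0_ge0 ?exprn_ge0 // subr_le0.
Qed.

Lemma absorb_poly_bound (R : realFieldType) (x : R) (e : nat) : 1 <= x ->
  32 * (4 * x) ^+ e + 1 <= (4 ^ (e + 3))%:R * x ^+ (4 ^ (e + 3)).
Proof.
move=> x_ge1; set K := (4 ^ (e + 3))%N.
have e_le_K : (e <= K)%N by have := ltn_expl (e + 3) (isT : (1 < 4)%N); rewrite /K; lia.
have xe_le := ler_weXn2l x_ge1 e_le_K.
have xK_ge1 := exprn_ege1 K x_ge1.
have a_ge1 : 1 <= 4 ^+ e :> R by rewrite exprn_ege1 ?ler1n.
rewrite /K natrX exprD exprMn (_ : 4 ^+ 3 = 64 :> R); last by rewrite !exprS expr0; lra.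
move: xe_le xK_ge1 a_ge1; move: (4 ^+ e) (x ^+ e) (x ^+ K) => a y z; nra.
Qed.

Theorem theorem21 (R : realType) :
  influence_conjecture R ->
  exists K : nat,
    forall (eps delta : R), 0 < eps -> 0 < delta ->
    forall (N T : nat) (Q : qalg R N T),
      exists t : dtree R N,
        ((depth t)%:R <= K%:R * (T.+1%:R / (eps * delta)) ^+ K) /\
        (1 - delta) * 2 ^+ N <=
          #|[set X : input N | `|deval t X - acc_prob Q X| <= eps]|%:R.
Proof.
case=> C infl_bound; pose K := (4 ^ (2 * C + 3 + 3))%N.
exists K => eps delta eps_gt0 delta_gt0 N T Q.
have bound_ge0 : 0 <= K%:R * (T.+1%:R / (eps * delta)) ^+ K.
  by rewrite mulr_ge0 // exprn_ge0 // divr_ge0 // mulr_ge0 // ltW.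
have [eps_le1|/ltW eps_ge1] := lerP eps 1.
  2: exact: const_tree_approx (or_introl eps_ge1).
have [delta_le1|/ltW delta_ge1] := lerP delta 1.
  2: exact: const_tree_approx (or_intror delta_ge1).
have [t [depth_le good]] := quantum_query_approx infl_bound Q eps_gt0 eps_le1 delta_gt0 delta_le1.
exists t; split => //; apply: le_trans depth_le _.
apply: absorb_poly_bound; apply: le_trans (Sn_le_scale T eps_gt0 eps_le1 delta_gt0 delta_le1).
by rewrite ler1n.
Qed.
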